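(* Fix $\theta,\gamma>0$ and $\beta>0$, and consider the modified GFI process described in the context. Then it is supercritical ($\overline\lambda>0$) when $\gamma>\theta$, critical ($\overline\lambda=0$) when $\gamma=\theta$, and subcritical ($\overline\lambda<0$) when $\gamma<\theta$.
   Context: The modified GFI process with parameters $(\beta,\theta,\gamma)$ has the same growth (each active vertex attaches a new active vertex by an open edge at rate $\beta$) and fragmentation (each open edge closes at rate $\gamma$) as the GFI process, but detection is attached to edges: each open edge of an active cluster independently triggers, at rate $\theta$, the isolation (inactivation) of its whole cluster (maximal set of vertices connected by open edges). In terms of sizes, an active cluster of size $n$ grows to size $n+1$ at rate $\beta n$, is isolated at rate $\theta(n-1)$, and splits into clusters of sizes $n-j$ and $j$ at rate $\gamma n/(j(j+1))$, $1\le j\le n-1$. The generator of its first moment semigroup is $\overline{\mathcal{L}}f(n)=\beta n(f(n+1)-f(n))-\theta(n-1)f(n)+\sum_{j=1}^{n-1}\frac{\gamma n}{j(j+1)}(f(j)+f(n-j)-f(n))$, and $\overline\lambda=\overline\lambda(\beta,\theta,\gamma)$ denotes its Perron root (Malthusian exponent), i.e. the real number for which there exist a positive function $\overline h$ bounded above and below by positive constants and a positive probability vector $\overline\pi$ with $\overline{\mathcal{L}}\overline h=\overline\lambda\,\overline h$ and $\overline\pi e^{t\overline{\mathcal L}}=e^{\overline\lambda t}\overline\pi$. *)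

From Stdlib Require Import Reals Lra Lia.
From Coquelicot Require Import Coquelicot.
Open Scope R_scope.

(* Cluster sizes are the natural numbers n >= 1; functions are on nat and only
   their values at n >= 1 matter (value at 0 is irrelevant / set to 0). *)

(* Generator of the first moment semigroup of the modified GFI process:
   Lbar f(n) = beta n (f(n+1)-f(n)) - theta (n-1) f(n)
             + sum_{j=1}^{n-1} gamma n/(j(j+1)) (f(j)+f(n-j)-f(n)). *)
Definition Lbar (beta theta gamma : R) (f : nat -> R) (n : nat) : R :=
  beta * INR n * (f (S n) - f n)
  - theta * (INR n - 1) * f n
  + sum_n_m (fun j => gamma * INR n / (INR j * (INR j + 1))
                      * (f j + f (n - j)%nat - f n)) 1 (n - 1).

Definition indic (m : nat) : nat -> R := fun n => if Nat.eqb n m then 1 else 0.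

Definition Lbar_entry (beta theta gamma : R) (n m : nat) : R :=
  Lbar beta theta gamma (indic m) n.

(* lam is a Perron root (Malthusian exponent) of Lbar:
   - a right eigenfunction h, bounded above and below by positive constants,
     with Lbar h = lam h on {n >= 1};
   - a positive probability vector pi on {n >= 1} which is a left eigenvector,
     (pi Lbar)(m) = sum_n pi(n) Lbar(n,m) = lam pi(m), the series converging
     (this is the stationary form of pi e^{t Lbar} = e^{lam t} pi). *)
Definition IsPerronRoot (beta theta gamma lam : R) : Prop :=
  (exists h : nat -> R,
      (exists c C : R, 0 < c /\ forall n, (1 <= n)%nat -> c <= h n <= C) /\
      (forall n, (1 <= n)%nat -> Lbar beta theta gamma h n = lam * h n)) /\
  (exists pi : nat -> R,
      pi 0%nat = 0 /\
      (forall n, (1 <= n)%nat -> 0 < pi n) /\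
      is_series pi 1 /\
      (forall m, (1 <= m)%nat ->
         is_series (fun n => pi n * Lbar_entry beta theta gamma n m) (lam * pi m))).

From Stdlib Require Import Reals Lra Lia Classical.
From Coquelicot Require Import Coquelicot.
Open Scope R_scope.

(* Pair the left eigenvector pi with a function f on the window {1, ..., M}.
   Cutting f off outside the window and using pi Lbar = lam pi gives, for f >= 0,
     lam sum_{n<=M} f(n) pi(n) - sum_{n<=M} pi(n) (Lbar f)(n) >= - beta M pi(M) f(M+1),
   the error being the growth flux out of the window.  Apply this to f = 1, for
   which Lbar 1 (n) = (gamma - theta)(n - 1), and to f = h - c, whose defect is
   -c times that of 1 because h is an eigenfunction.  This yields
     |lam S_M - (gamma - theta) Q_M| <= (beta C / c) M pi(M),
   with S_M = sum_{n<=M} pi(n) >= pi(1) > 0 and Q_M = sum_{n<=M} (n - 1) pi(n) >= pi(2) > 0.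
   As pi is summable, M pi(M) is arbitrarily small for suitable M, so lam has the
   sign of gamma - theta. *)


Lemma sum_n_m_le_loc (a b : nat -> R) (n m : nat) :
  (forall k, (n <= k <= m)%nat -> a k <= b k) -> sum_n_m a n m <= sum_n_m b n m.
Proof.
  intros Hab. induction m as [|m IH].
  - destruct n as [|n].
    + rewrite !sum_n_n. apply Hab; lia.
    + rewrite !sum_n_m_zero by lia. apply Rle_refl.
  - destruct (Nat.le_gt_cases n (S m)) as [Hnm|Hmn].
    + rewrite !sum_n_Sm by exact Hnm. change (@plus R_AbelianMonoid) with Rplus.
      assert (sum_n_m a n m <= sum_n_m b n m) by (apply IH; intros; apply Hab; lia).
      assert (a (S m) <= b (S m)) by (apply Hab; lia).
      lra.
    + rewrite !sum_n_m_zero by lia. apply Rle_refl.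
Qed.

Lemma sum_n_m_nonneg (a : nat -> R) (n m : nat) :
  (forall k, (n <= k <= m)%nat -> 0 <= a k) -> 0 <= sum_n_m a n m.
Proof.
  intros Ha. rewrite <- (Rmult_0_r (INR (S m - n))), <- sum_n_m_const.
  apply sum_n_m_le_loc. exact Ha.
Qed.

Lemma sum_n_m_ge_first (a : nat -> R) (n m : nat) :
  (forall k, (n <= k <= m)%nat -> 0 <= a k) -> (n <= m)%nat -> a n <= sum_n_m a n m.
Proof.
  intros Ha Hnm. rewrite sum_Sn_m by exact Hnm. change (@plus R_AbelianMonoid) with Rplus.
  assert (0 <= sum_n_m a (S n) m) by (apply sum_n_m_nonneg; intros; apply Ha; lia).
  lra.
Qed.

(* The casts to R make these equations live in R rather than in the carrier of
   R_AbelianMonoid, so that ring and field apply after rewriting with them. *)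
Lemma sum_n_m_Rmult_l (u : nat -> R) (a : R) (n m : nat) :
  (sum_n_m (fun k => a * u k) n m : R) = a * sum_n_m u n m.
Proof. apply (sum_n_m_mult_l (K := R_Ring)). Qed.

Lemma sum_n_m_lin (u v : nat -> R) (a : R) (n m : nat) :
  (sum_n_m (fun k => u k + a * v k) n m : R) = sum_n_m u n m + a * sum_n_m v n m.
Proof.
  rewrite <- sum_n_m_Rmult_l. apply (sum_n_m_plus (G := R_AbelianMonoid)).
Qed.

Lemma sum_inv_consecutive (k : nat) :
  (sum_n_m (fun j => 1 / (INR j * (INR j + 1))) 1 k : R) = 1 - 1 / (INR k + 1).
Proof.
  induction k as [|k IH].
  - rewrite sum_n_m_zero by lia. change (@zero R_AbelianMonoid) with 0. simpl INR. field.
  - rewrite sum_n_Sm, IH by lia. change (@plus R_AbelianMonoid) with Rplus.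
    rewrite S_INR. assert (0 <= INR k) by apply pos_INR. field. lra.
Qed.

Lemma is_series_0 : is_series (fun _ : nat => 0) 0.
Proof.
  apply (filterlim_ext (fun _ => 0)); [|apply filterlim_const].
  intros n. rewrite sum_n_const. simpl. ring.
Qed.

Lemma is_series_partial_le (a : nat -> R) (l : R) (M : nat) :
  is_series a l -> (forall n, (M < n)%nat -> 0 <= a n) -> sum_n a M <= l.
Proof.
  intros Ha Htail.
  apply (is_lim_seq_incr_compare (fun n => sum_n a (n + M)) l) with (n := 0%nat).
  - apply (is_lim_seq_incr_n (sum_n a) M l). exact Ha.
  - intros n. rewrite Nat.add_succ_l, sum_Sn. change (@plus R_AbelianMonoid) with Rplus.
    assert (0 <= a (S (n + M))) by (apply Htail; lia).
    lra.
Qed.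

Lemma ex_series_small_weighted_term (a : nat -> R) :
  ex_series a -> forall (eps : R) (N : nat), 0 < eps -> exists n, (N <= n)%nat /\ INR n * a n < eps.
Proof.
  intros Ha eps N Heps. apply NNPP. intros Hnone.
  (* Otherwise a(n) >= eps / n from N on, and the block K < n <= 2K of the series
     sums to at least eps / 2 for every large K, against the Cauchy criterion. *)
  assert (Hbig : forall n, (N <= n)%nat -> eps <= INR n * a n).
  { intros n Hn. apply Rnot_lt_le. intros Hlt. apply Hnone. exists n. split; assumption. }
  destruct (Cauchy_ex_series a Ha (mkposreal (eps / 2) ltac:(lra))) as [N0 HN0].
  set (K := S (Nat.max N N0)).
  assert (HK : 0 < INR K) by (apply lt_0_INR; unfold K; lia).
  assert (Hterm : forall k, (S K <= k <= K + K)%nat -> eps / (2 * INR K) <= a k).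
  { intros k Hk.
    assert (Hk0 : 0 < INR k) by (apply lt_0_INR; lia).
    assert (HkK : INR k <= INR (K + K)) by (apply le_INR; lia).
    rewrite plus_INR in HkK.
    assert (Hka : eps <= INR k * a k) by (apply Hbig; unfold K in Hk; lia).
    apply (Rmult_le_reg_l (2 * INR K)); [lra|].
    field_simplify; [|lra]. nra. }
  assert (Hsum : eps / 2 <= sum_n_m a (S K) (K + K)).
  { replace (eps / 2) with (INR (S (K + K) - S K) * (eps / (2 * INR K)))
      by (replace (S (K + K) - S K)%nat with K by lia; field; lra).
    rewrite <- sum_n_m_const. apply sum_n_m_le_loc. exact Hterm. }
  specialize (HN0 (S K) (K + K)%nat ltac:(unfold K; lia) ltac:(unfold K; lia)).
  change (norm (sum_n_m a (S K) (K + K))) with (Rabs (sum_n_m a (S K) (K + K))) in HN0.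
  apply Rabs_def2 in HN0. cbn [pos] in HN0. lra.
Qed.

Section Generator.
Variables beta theta gamma : R.

Lemma Lbar_ext (f g : nat -> R) (n : nat) :
  (forall k, f k = g k) -> Lbar beta theta gamma f n = Lbar beta theta gamma g n.
Proof.
  intros Hfg. unfold Lbar. rewrite !Hfg. f_equal.
  apply sum_n_m_ext. intros j. rewrite !Hfg. reflexivity.
Qed.

Lemma Lbar_zero (f : nat -> R) (n : nat) :
  (forall k, f k = 0) -> Lbar beta theta gamma f n = 0.
Proof.
  intros Hf. unfold Lbar. rewrite (sum_n_m_ext _ (fun _ => 0)).
  - rewrite sum_n_m_const, !Hf. ring.
  - intros j. rewrite !Hf. simpl. ring.
Qed.

Lemma Lbar_lin (f g : nat -> R) (a : R) (n : nat) :
  Lbar beta theta gamma (fun k => f k + a * g k) n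
  = Lbar beta theta gamma f n + a * Lbar beta theta gamma g n.
Proof.
  unfold Lbar.
  rewrite (sum_n_m_ext _ (fun j =>
              gamma * INR n / (INR j * (INR j + 1)) * (f j + f (n - j)%nat - f n)
              + a * (gamma * INR n / (INR j * (INR j + 1)) * (g j + g (n - j)%nat - g n)))).
  - rewrite sum_n_m_lin. ring.
  - intros j. simpl. ring.
Qed.

Lemma Lbar_one (n : nat) :
  (1 <= n)%nat -> Lbar beta theta gamma (fun _ => 1) n = (gamma - theta) * (INR n - 1).
Proof.
  intros Hn. destruct n as [|k]; [lia|]. unfold Lbar.
  replace (S k - 1)%nat with k by lia.
  rewrite (sum_n_m_ext _ (fun j => gamma * INR (S k) * (1 / (INR j * (INR j + 1)))))
    by (intros; simpl; unfold Rdiv; ring).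
  rewrite sum_n_m_Rmult_l, sum_inv_consecutive.
  rewrite S_INR. assert (0 <= INR k) by apply pos_INR. field. lra.
Qed.

Lemma Lbar_boundary (f g : nat -> R) (n : nat) :
  (1 <= n)%nat -> (forall k, (1 <= k <= n)%nat -> f k = g k) ->
  Lbar beta theta gamma f n = Lbar beta theta gamma g n + beta * INR n * (f (S n) - g (S n)).
Proof.
  intros Hn Hfg. unfold Lbar.
  rewrite (sum_n_m_ext_loc _ (fun j => gamma * INR n / (INR j * (INR j + 1))
                                       * (g j + g (n - j)%nat - g n))).
  2:{ intros j Hj. rewrite (Hfg j), (Hfg (n - j)%nat), (Hfg n) by lia. reflexivity. }
  rewrite (Hfg n) by lia. ring.
Qed.

Lemma Lbar_nonneg_off_support (f : nat -> R) (n : nat) :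
  0 <= gamma -> (forall k, 0 <= f k) -> f n = 0 -> f (S n) = 0 ->
  0 <= Lbar beta theta gamma f n.
Proof.
  intros Hgamma Hf Hn HSn. unfold Lbar. rewrite Hn, HSn.
  assert (0 <= sum_n_m (fun j => gamma * INR n / (INR j * (INR j + 1))
                                  * (f j + f (n - j)%nat - 0)) 1 (n - 1)).
  { apply sum_n_m_nonneg. intros j Hj. apply Rmult_le_pos.
    - assert (0 < INR j) by (apply lt_0_INR; lia).
      apply Rdiv_le_0_compat; [apply Rmult_le_pos; [lra | apply pos_INR] | nra].
    - generalize (Hf j) (Hf (n - j)%nat). lra. }
  lra.
Qed.

End Generator.

Definition cutoff (f : nat -> R) (M k : nat) : R :=
  if andb (Nat.leb 1 k) (Nat.leb k M) then f k else 0.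

Lemma cutoff_in (f : nat -> R) (M k : nat) : (1 <= k <= M)%nat -> cutoff f M k = f k.
Proof.
  intros Hk. unfold cutoff.
  destruct (Nat.leb_spec 1 k), (Nat.leb_spec k M); simpl; [reflexivity | lia ..].
Qed.

Lemma cutoff_out (f : nat -> R) (M k : nat) : (M < k)%nat -> cutoff f M k = 0.
Proof.
  intros Hk. unfold cutoff.
  destruct (Nat.leb_spec 1 k), (Nat.leb_spec k M); simpl; [lia | reflexivity ..].
Qed.

Lemma cutoff_0 (f : nat -> R) (k : nat) : cutoff f 0 k = 0.
Proof.
  unfold cutoff. destruct (Nat.leb_spec 1 k), (Nat.leb_spec k 0); simpl; [lia | reflexivity ..].
Qed.

Lemma cutoff_S (f : nat -> R) (M k : nat) :
  cutoff f (S M) k = cutoff f M k + f (S M) * indic (S M) k.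
Proof.
  unfold cutoff, indic.
  destruct (Nat.leb_spec 1 k), (Nat.leb_spec k M), (Nat.leb_spec k (S M)), (Nat.eqb_spec k (S M));
    simpl; try lia; subst; ring.
Qed.

Lemma cutoff_nonneg (f : nat -> R) (M : nat) :
  (forall k, (1 <= k <= M)%nat -> 0 <= f k) -> forall k, 0 <= cutoff f M k.
Proof.
  intros Hf k. unfold cutoff.
  destruct (Nat.leb_spec 1 k), (Nat.leb_spec k M); simpl; try lra. apply Hf. lia.
Qed.

Section LeftEigenvector.
Variables (beta theta gamma lam : R) (pi : nat -> R).
Hypothesis pi_left : forall m, (1 <= m)%nat ->
  is_series (fun n => pi n * Lbar_entry beta theta gamma n m) (lam * pi m).

Lemma is_series_pairing_cutoff (f : nat -> R) (M : nat) :
  is_series (fun n => pi n * Lbar beta theta gamma (cutoff f M) n)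
            (lam * sum_n_m (fun m => f m * pi m) 1 M).
Proof.
  induction M as [|M IH].
  - rewrite sum_n_m_zero by lia. change (@zero R_AbelianMonoid) with 0.
    rewrite Rmult_0_r.
    apply (is_series_ext (fun _ => 0)); [|exact is_series_0].
    intros n. simpl. rewrite Lbar_zero by apply cutoff_0. ring.
  - rewrite sum_n_Sm by lia. change (@plus R_AbelianMonoid) with Rplus.
    apply (is_series_ext (fun n => pi n * Lbar beta theta gamma (cutoff f M) n
                                   + f (S M) * (pi n * Lbar_entry beta theta gamma n (S M)))).
    + intros n. unfold Lbar_entry.
      rewrite (Lbar_ext _ _ _ (cutoff f (S M)) (fun k => cutoff f M k + f (S M) * indic (S M) k))
        by (intros; apply cutoff_S).
      rewrite Lbar_lin. simpl. ring.
    + replace (lam * (sum_n_m (fun m => f m * pi m) 1 M + f (S M) * pi (S M)))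
        with (lam * sum_n_m (fun m => f m * pi m) 1 M + f (S M) * (lam * pi (S M))) by ring.
      apply (is_series_plus (V := R_NormedModule)); [exact IH|].
      apply (is_series_scal (V := R_NormedModule)). apply pi_left. lia.
Qed.

Definition pairing_defect (f : nat -> R) (M : nat) : R :=
  lam * sum_n_m (fun m => f m * pi m) 1 M
  - sum_n_m (fun n => pi n * Lbar beta theta gamma f n) 1 M.

Lemma pairing_defect_lin (f g : nat -> R) (a : R) (M : nat) :
  pairing_defect (fun k => f k + a * g k) M = pairing_defect f M + a * pairing_defect g M.
Proof.
  unfold pairing_defect.
  rewrite (sum_n_m_ext (fun m => (f m + a * g m) * pi m) (fun m => f m * pi m + a * (g m * pi m)))
    by (intros; simpl; ring).
  rewrite (sum_n_m_ext (fun n => pi n * Lbar beta theta gamma (fun k => f k + a * g k) n)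
                       (fun n => pi n * Lbar beta theta gamma f n
                                 + a * (pi n * Lbar beta theta gamma g n)))
    by (intros; simpl; rewrite Lbar_lin; ring).
  rewrite !sum_n_m_lin. ring.
Qed.

Lemma pairing_defect_eigen (h : nat -> R) (M : nat) :
  (forall n, (1 <= n)%nat -> Lbar beta theta gamma h n = lam * h n) -> pairing_defect h M = 0.
Proof.
  intros Heig. unfold pairing_defect.
  rewrite (sum_n_m_ext_loc (fun n => pi n * Lbar beta theta gamma h n)
                           (fun n => lam * (h n * pi n)))
    by (intros n Hn; simpl; rewrite Heig by lia; ring).
  rewrite sum_n_m_Rmult_l. ring.
Qed.

Lemma pairing_defect_one (M : nat) :
  pairing_defect (fun _ => 1) M
  = lam * sum_n_m pi 1 M - (gamma - theta) * sum_n_m (fun n => (INR n - 1) * pi n) 1 M.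
Proof.
  unfold pairing_defect.
  rewrite (sum_n_m_ext (fun m => 1 * pi m) pi) by (intros; simpl; ring).
  rewrite (sum_n_m_ext_loc (fun n => pi n * Lbar beta theta gamma (fun _ => 1) n)
                            (fun n => (gamma - theta) * ((INR n - 1) * pi n)))
    by (intros n Hn; simpl; rewrite Lbar_one by lia; ring).
  rewrite sum_n_m_Rmult_l. reflexivity.
Qed.

Hypothesis pi_0 : pi 0%nat = 0.
Hypothesis pi_nonneg : forall n, 0 <= pi n.
Hypothesis gamma_nonneg : 0 <= gamma.

Lemma pairing_defect_ge (f : nat -> R) (M : nat) :
  (1 <= M)%nat -> (forall k, (1 <= k <= M)%nat -> 0 <= f k) ->
  - (beta * INR M * pi M * f (S M)) <= pairing_defect f M.
Proof.
  intros HM Hf.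
  (* Beyond the window Lbar (cutoff f M) only sees fragmentation into it, which is
     nonnegative; inside, the cutoff changes Lbar only through growth from M to M+1. *)
  assert (Hpartial := is_series_partial_le _ _ M (is_series_pairing_cutoff f M)).
  assert (Htail : forall n, (M < n)%nat -> 0 <= pi n * Lbar beta theta gamma (cutoff f M) n).
  { intros n Hn. apply Rmult_le_pos; [apply pi_nonneg|].
    apply Lbar_nonneg_off_support;
      [exact gamma_nonneg | apply cutoff_nonneg, Hf | apply cutoff_out; lia ..]. }
  specialize (Hpartial Htail). clear Htail.
  unfold sum_n in Hpartial. rewrite sum_Sn_m in Hpartial by lia.
  destruct M as [|K]; [lia|].
  rewrite pi_0, Rmult_0_l, sum_n_Sm in Hpartial by lia.
  assert (Hboundary : forall k, (1 <= k <= S K)%nat ->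
    Lbar beta theta gamma (cutoff f (S K)) k
    = Lbar beta theta gamma f k + beta * INR k * (cutoff f (S K) (S k) - f (S k))).
  { intros k Hk. apply Lbar_boundary; [lia|]. intros j Hj. apply cutoff_in. lia. }
  rewrite (sum_n_m_ext_loc _ (fun n => pi n * Lbar beta theta gamma f n)) in Hpartial.
  2:{ intros k Hk. rewrite Hboundary, cutoff_in by lia. simpl. ring. }
  rewrite Hboundary, cutoff_out in Hpartial by lia.
  unfold pairing_defect. rewrite (sum_n_Sm (fun n => pi n * Lbar beta theta gamma f n)) by lia.
  change (@plus R_AbelianMonoid) with Rplus in *. lra.
Qed.

Hypothesis beta_pos : 0 < beta.
Variables (c C : R) (h : nat -> R).
Hypothesis c_pos : 0 < c.
Hypothesis h_bounds : forall n, (1 <= n)%nat -> c <= h n <= C.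
Hypothesis h_eigen : forall n, (1 <= n)%nat -> Lbar beta theta gamma h n = lam * h n.

Lemma pairing_defect_one_bound (M : nat) :
  (1 <= M)%nat -> Rabs (pairing_defect (fun _ => 1) M) <= beta * C / c * (INR M * pi M).
Proof.
  intros HM.
  assert (Hone := pairing_defect_ge (fun _ => 1) M HM (fun _ _ => Rle_0_1)).
  assert (Hshift : - (beta * INR M * pi M * (h (S M) + - c * 1))
                   <= pairing_defect (fun k => h k + - c * 1) M).
  { apply (pairing_defect_ge (fun k => h k + - c * 1)); [exact HM |].
    intros k Hk. destruct (h_bounds k); [lia | lra]. }
  rewrite pairing_defect_lin, (pairing_defect_eigen h M h_eigen) in Hshift.
  destruct (h_bounds (S M)) as [HcM HCM]; [lia|].
  assert (Hb : 0 <= beta * INR M * pi M).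
  { apply Rmult_le_pos; [apply Rmult_le_pos; [lra | apply pos_INR] | apply pi_nonneg]. }
  set (D := pairing_defect (fun _ => 1) M) in *.
  set (b := beta * INR M * pi M) in *.
  replace (beta * C / c * (INR M * pi M)) with (b * C / c) by (unfold b; field; lra).
  apply Rabs_le. split.
  - assert (HCc : b * 1 <= b * (C / c)).
    { apply Rmult_le_compat_l; [exact Hb |]. apply Rle_div_r; lra. }
    cbv beta in Hone. unfold Rdiv in *. lra.
  - apply (Rmult_le_reg_l c); [lra|]. replace (c * (b * C / c)) with (b * C) by (field; lra). nra.
Qed.

Hypothesis pi_summable : ex_series pi.

Lemma pairing_balance (eps : R) :
  0 < eps -> exists S Q,
    pi 1%nat <= S /\ pi 2%nat <= Q /\ Rabs (lam * S - (gamma - theta) * Q) < eps.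
Proof.
  intros Heps.
  assert (HC : 0 < C) by (destruct (h_bounds 1%nat); [lia | lra]).
  destruct (ex_series_small_weighted_term pi pi_summable (eps * c / (beta * C)) 2)
    as [M [HM Hsmall]].
  { apply Rdiv_lt_0_compat; apply Rmult_lt_0_compat; lra. }
  exists (sum_n_m pi 1 M), (sum_n_m (fun n => (INR n - 1) * pi n) 1 M).
  split; [|split].
  - apply sum_n_m_ge_first; [intros; apply pi_nonneg | lia].
  - assert (Hterm : forall k, (2 <= k <= M)%nat -> 0 <= (INR k - 1) * pi k).
    { intros k Hk. apply Rmult_le_pos; [|apply pi_nonneg].
      assert (INR 2 <= INR k) by (apply le_INR; lia). simpl in *. lra. }
    assert (H2 := sum_n_m_ge_first _ 2 M Hterm HM).
    rewrite sum_Sn_m by lia. change (@plus R_AbelianMonoid) with Rplus.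
    simpl in H2 |- *. lra.
  - rewrite <- pairing_defect_one.
    eapply Rle_lt_trans; [apply pairing_defect_one_bound; lia|].
    replace eps with (beta * C / c * (eps * c / (beta * C))) by (field; lra).
    apply Rmult_lt_compat_l; [|exact Hsmall].
    apply Rdiv_lt_0_compat; [apply Rmult_lt_0_compat|]; lra.
Qed.
End LeftEigenvector.

Lemma same_sign_of_balance (lam d p q : R) :
  0 < p -> 0 < q ->
  (forall eps, 0 < eps -> exists S Q, p <= S /\ q <= Q /\ Rabs (lam * S - d * Q) < eps) ->
  (0 < d -> 0 < lam) /\ (d = 0 -> lam = 0) /\ (d < 0 -> lam < 0).
Proof.
  intros Hp Hq Hbal. split; [|split].
  - intros Hd. destruct (Rlt_le_dec 0 lam) as [|Hlam]; [assumption|].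
    destruct (Hbal (d * q)) as [S [Q [HS [HQ Habs]]]]; [nra|].
    apply Rabs_def2 in Habs. nra.
  - intros ->. destruct (Req_dec lam 0) as [|Hlam]; [assumption|].
    destruct (Hbal (Rabs lam * p)) as [S [Q [HS [HQ Habs]]]].
    { apply Rmult_lt_0_compat; [apply Rabs_pos_lt |]; assumption. }
    rewrite Rmult_0_l, Rminus_0_r, Rabs_mult, (Rabs_pos_eq S) in Habs by lra.
    assert (Rabs lam * p <= Rabs lam * S) by (apply Rmult_le_compat_l; [apply Rabs_pos | lra]).
    lra.
  - intros Hd. destruct (Rlt_le_dec lam 0) as [|Hlam]; [assumption|].
    destruct (Hbal (- d * q)) as [S [Q [HS [HQ Habs]]]]; [nra|].
    apply Rabs_def2 in Habs. nra.
Qed.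

Theorem lemma6p7 (beta theta gamma : R) (hbeta : 0 < beta) (htheta : 0 < theta)
  (hgamma : 0 < gamma) (lam : R) (hlam : IsPerronRoot beta theta gamma lam) :
  (gamma > theta -> lam > 0) /\ (gamma = theta -> lam = 0) /\ (gamma < theta -> lam < 0).
Proof.
  destruct hlam as [[h [[c [C [Hc Hh]]] Heig]] [pi [Hpi0 [Hpi_pos [Hpi_sum Hpi_left]]]]].
  assert (Hpi_nonneg : forall n, 0 <= pi n).
  { intros [|n]; [lra | apply Rlt_le, Hpi_pos; lia]. }
  destruct (same_sign_of_balance lam (gamma - theta) (pi 1%nat) (pi 2%nat))
    as [Hsuper [Hcrit Hsub]].
  - apply Hpi_pos. lia.
  - apply Hpi_pos. lia.
  - intros eps Heps.
    apply (pairing_balance beta theta gamma lam pi Hpi_left Hpi0 Hpi_nonneg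
             ltac:(lra) hbeta c C h Hc Hh Heig (ex_intro _ 1 Hpi_sum) eps Heps).
  - split; [|split]; intros; [apply Hsuper | apply Hcrit | apply Hsub]; lra.
Qed.
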